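(* Consider the quality-aware crowdsensing role selection game with cross-quality data sharing described in the context. A strategy profile $(x^\ast,q^\ast)$ is an equilibrium if and only if its average sharing benefits $\boldsymbol\Phi=(\Phi_1,\dots,\Phi_K)$ satisfy $$\Phi_k=\widetilde{\Phi}_k(\boldsymbol\Phi)\triangleq\sum_{i=1}^{k}\frac{p\,h(q_i)\,|\widetilde{S}^{\mathrm R}_i(\boldsymbol\Phi)|}{\sum_{j=i}^{K}|\widetilde{S}^{\mathrm S}_j(\boldsymbol\Phi)|},\qquad\forall k\in\{1,\dots,K\}.$$
   Context: Users form a continuum; a user's type is $(v,c)\in[0,1]^2$, distributed uniformly on $[0,1]^2$. There are $K$ data qualities $0<q_1<\dots<q_K$; $f,g,h$ are increasing functions of quality; parameters $w>0$, $s\ge0$, $p\ge0$ (pure quality-based pricing, revenue sharing factor $\eta=1$). Each user chooses one of $(\mathrm S,q_k)$ (sensor of quality $q_k$), $(\mathrm R,q_k)$ (requester of quality $q_k$), $k=1,\dots,K$, or $\mathrm A$ (alien). Given $\boldsymbol\Phi=(\Phi_1,\dots,\Phi_K)$, payoffs are $\pi_{vc}(\mathrm S,q_k)=wvf(q_k)-cg(q_k)+\Phi_k$, $\pi_{vc}(\mathrm R,q_k)=wvf(q_k)-s-p\,h(q_k)$, $\pi_{vc}(\mathrm A)=0$. In cross-quality sharing, a requester of quality $q_i$ can obtain data from any sensor of quality $q_j\ge q_i$ (paying $p\,h(q_i)$), requests being spread uniformly over all such sensors; hence for market shares $S^{\mathrm S}_j,S^{\mathrm R}_i$ (sets of types choosing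 $(\mathrm S,q_j)$, $(\mathrm R,q_i)$; $|\cdot|$ Lebesgue measure) the induced average sharing benefit of a quality-$q_k$ sensor is $\Phi_k=\sum_{i=1}^k p\,h(q_i)|S^{\mathrm R}_i|/\sum_{j=i}^K|S^{\mathrm S}_j|$. A profile is an equilibrium if each type's option maximizes its payoff among all $2K+1$ options at the induced $\boldsymbol\Phi$ (ties on null sets ignored). For given $\boldsymbol\Phi$, $\widetilde{S}^{\mathrm S}_j(\boldsymbol\Phi)$ and $\widetilde{S}^{\mathrm R}_i(\boldsymbol\Phi)$ are the sets of types for which $(\mathrm S,q_j)$, resp. $(\mathrm R,q_i)$, is payoff-maximizing under $\boldsymbol\Phi$ (the best-response market shares). *)

From HB Require Import structures.
From mathcomp Require Import all_boot all_order all_algebra.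
From mathcomp Require Import all_classical all_reals all_analysis.
Set Implicit Arguments. Unset Strict Implicit. Unset Printing Implicit Defensive.
Import Order.TTheory GRing.Theory Num.Theory.
Local Open Scope classical_set_scope.
Local Open Scope ring_scope.

Inductive role (K : nat) : Type :=
| RoleS of 'I_K   (* sensor of quality q_k *)
| RoleR of 'I_K   (* requester of quality q_k *)
| RoleA.          (* alien *)
Arguments RoleA {K}.

Section Model.
Variable R : realType.

(* Lebesgue measure on R^2 (types (v,c)). *)
Definition leb2 : set (R * R) -> \bar R :=
  ((@lebesgue_measure R) \x (@lebesgue_measure R))%E.

Definition square : set (R * R) :=
  [set x | (0 <= x.1 <= 1) /\ (0 <= x.2 <= 1)].

Definition share (A : set (R * R)) : R := fine (leb2 (A `&` square)).

Variables (K : nat) (q : 'I_K -> R) (f g h : R -> R) (w s p : R).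

Definition payoff (Phi : 'I_K -> R) (x : R * R) (o : role K) : R :=
  match o with
  | RoleS k => w * x.1 * f (q k) - x.2 * g (q k) + Phi k
  | RoleR k => w * x.1 * f (q k) - s - p * h (q k)
  | RoleA => 0
  end.

Definition is_best (Phi : 'I_K -> R) (x : R * R) (o : role K) : Prop :=
  forall o' : role K, payoff Phi x o' <= payoff Phi x o.

(* average sharing benefit of a quality-q_k sensor, given the measures of the
   requester market shares shR and sensor market shares shS
   (division by 0 yields 0, MathComp's convention) *)
Definition avg_benefit (shR shS : 'I_K -> R) (k : 'I_K) : R :=
  \sum_(i < K | (i <= k)%N)
     p * h (q i) * shR i / (\sum_(j < K | (i <= j)%N) shS j).

Definition Phi_of (sigma : R * R -> role K) : 'I_K -> R :=
  avg_benefit (fun i => share (sigma @^-1` [set RoleR i]))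
              (fun j => share (sigma @^-1` [set RoleS j])).

Definition BR_S (Phi : 'I_K -> R) (j : 'I_K) : set (R * R) :=
  [set x | square x /\ is_best Phi x (RoleS j)].
Definition BR_R (Phi : 'I_K -> R) (i : 'I_K) : set (R * R) :=
  [set x | square x /\ is_best Phi x (RoleR i)].

Definition Phi_tilde (Phi : 'I_K -> R) : 'I_K -> R :=
  avg_benefit (fun i => share (BR_R Phi i)) (fun j => share (BR_S Phi j)).

Definition ae_best_response (sigma : R * R -> role K) (Phi : 'I_K -> R) : Prop :=
  leb2.-negligible [set x | square x /\ ~ is_best Phi x (sigma x)].

Definition equilibrium (sigma : R * R -> role K) : Prop :=
  ae_best_response sigma (Phi_of sigma).

End Model.

From HB Require Import structures.
From mathcomp Require Import all_boot all_order all_algebra.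
From mathcomp Require Import all_classical all_reals all_analysis.
From mathcomp Require Import ring lra.
Set Implicit Arguments.
Unset Strict Implicit.
Unset Printing Implicit Defensive.
Import Order.TTheory GRing.Theory Num.Theory.
Local Open Scope classical_set_scope.
Local Open Scope ring_scope.

(* Every payoff is affine in the type (v, c), and two distinct options have
   distinct slope vectors: k |-> f (q k) and k |-> g (q k) are injective, the
   sign of the c-slope separates sensors from the other options, and f > 0
   separates requesters from aliens.  Hence two options tie only on a line,
   which is Lebesgue-null.  So if a profile best-responds to Phi almost
   everywhere, the set of types choosing an option differs from the
   best-response set of that option by a null set, and the profile induces
   exactly Phi_tilde(Phi). *)

Section negligible_measure.
Context d (T : measurableType d) (R : realType).
Variable mu : {measure set T -> \bar R}.

Lemma le_measure_negligible (A B N : set T) : measurable A -> measurable B ->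
  mu.-negligible N -> A `<=` B `|` N -> (mu A <= mu B)%E.
Proof.
move=> mA mB [M [mM M0 NM]] ABN.
rewrite -(@measureU0 _ _ _ mu _ _ mB mM M0) le_measure ?inE //.
  exact: measurableU.
by move=> x /ABN [Bx|/NM Mx]; [left|right].
Qed.

Lemma negligible_fin_bigcup (I : Type) (D : set I) (F : I -> set T) :
  finite_set D -> (forall i, D i -> mu.-negligible (F i)) ->
  mu.-negligible (\bigcup_(i in D) F i).
Proof.
elim/Pchoice: I => I in D F * => Dfin FN.
rewrite -bigsetU_fset_set // big_seq.
elim/big_ind: _ => //; [exact: negligible_set0|exact: negligibleU|].
by move=> i; rewrite in_fset_set ?inE // => /FN.
Qed.

End negligible_measure.

Section lebesgue_plane.
Variable R : realType.

Lemma measurable_square : measurable (@square R).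
Proof.
have -> : @square R = `[0, 1]%classic `*` `[0, 1]%classic.
  by apply/seteqP; split => x; rewrite /square /= !in_itv.
by apply: measurableX; exact: measurable_itv.
Qed.

Lemma measurable_fun_affine (a b d : R) :
  measurable_fun setT (fun x : R * R => a * x.1 + b * x.2 + d).
Proof.
apply: measurable_realfun.measurable_funD => //.
apply: measurable_realfun.measurable_funD.
  by apply: measurable_realfun.measurable_funM => //; exact: measurable_fst.
by apply: measurable_realfun.measurable_funM => //; exact: measurable_snd.
Qed.

Lemma negligible_line (a b d : R) : a != 0 \/ b != 0 ->
  (@leb2 R).-negligible [set x | a * x.1 + b * x.2 + d = 0].
Proof.
have [b0 [a0|//]|b0 _] := eqVneq b 0.
  exists ([set - d / a] `*` setT); split.
  - by apply: measurableX; [exact: measurable_set1|exact: measurableT].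
  - rewrite /leb2 product_measure1E //.
    by rewrite [X in (X * _)%E]lebesgue_measure_set1 mul0e.
  move=> x; rewrite /= b0 mul0r addr0 => line; split => //.
  by apply: (mulfI a0); rewrite mulrCA divff // mulr1; lra.
have mline : measurable [set x : R * R | a * x.1 + b * x.2 + d = 0].
  rewrite -[X in measurable X]setTI.
  exact: measurable_fun_affine (measurable_set1 0).
exists [set x : R * R | a * x.1 + b * x.2 + d = 0]; split => //.
(* each vertical section is the single point c = (- d - a v) / b *)
rewrite /leb2 /product_measure1 /= (eq_integral (fun _ => 0%E)) ?integral0 //.
move=> v _; apply/eqP; rewrite eq_le measure_ge0 andbT.
rewrite -(lebesgue_measure_set1 ((- d - a * v) / b)) le_measure ?inE //.
  exact: measurable_xsection.
move=> c; rewrite /xsection /= inE /= => line.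
by apply: (mulIf b0); rewrite mulrVK ?unitfE //; lra.
Qed.

End lebesgue_plane.

Section game.
Variables (R : realType) (K : nat) (q : 'I_K -> R) (f g h : R -> R) (w s p : R).
Hypotheses (q_pos : forall k, 0 < q k)
  (q_incr : forall k l : 'I_K, (k < l)%N -> q k < q l)
  (f_incr : forall x y : R, 0 < x -> x < y -> f x < f y)
  (g_incr : forall x y : R, 0 < x -> x < y -> g x < g y)
  (f_pos : forall x : R, 0 < x -> 0 < f x)
  (g_pos : forall x : R, 0 < x -> 0 < g x)
  (w_pos : 0 < w).

Local Notation payoff := (payoff q f g h w s p).
Local Notation is_best := (is_best q f g h w s p).

Lemma finite_roles : finite_set [set: role K].
Proof.
have -> : [set: role K] = @RoleS K @` setT `|` @RoleR K @` setT `|` [set RoleA].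
  apply/seteqP; split => // -[k|k|] _.
  - by left; left; exists k.
  - by left; right; exists k.
  - by right.
rewrite !finite_setU; split; last exact: finite_set1.
by split; apply: finite_image; exact: finite_finset.
Qed.

Definition slope_v (o : role K) : R :=
  match o with RoleS k | RoleR k => w * f (q k) | RoleA => 0 end.
Definition slope_c (o : role K) : R :=
  match o with RoleS k => - g (q k) | _ => 0 end.
Definition intercept (Phi : 'I_K -> R) (o : role K) : R :=
  match o with RoleS k => Phi k | RoleR k => - s - p * h (q k) | RoleA => 0 end.

Lemma payoffE Phi x o :
  payoff Phi x o = slope_v o * x.1 + slope_c o * x.2 + intercept Phi o.
Proof. by case: o => [k|k|] /=; ring. Qed.

Lemma incr_comp_inj (F : R -> R) :
  (forall x y, 0 < x -> x < y -> F x < F y) -> injective (F \o q).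
Proof.
move=> F_incr k l /= Fkl; apply: val_inj.
have Fq_lt (i j : 'I_K) : (i < j)%N -> F (q i) < F (q j).
  by move=> /q_incr; exact: F_incr (q_pos i).
by have [/Fq_lt|/Fq_lt|//] := ltngtP k l; rewrite Fkl ltxx.
Qed.

Lemma slopes_inj o o' :
  slope_v o = slope_v o' -> slope_c o = slope_c o' -> o = o'.
Proof.
have gq k : 0 < g (q k) := g_pos (q_pos k).
have fq k : 0 < w * f (q k) := mulr_gt0 w_pos (f_pos (q_pos k)).
case: o => [k|k|]; case: o' => [l|l|] //= ev ec.
- by rewrite (incr_comp_inj g_incr (oppr_inj ec)).
- by exfalso; have := gq k; lra.
- by exfalso; have := gq k; lra.
- by exfalso; have := gq l; lra.
- by rewrite (incr_comp_inj f_incr (mulfI (lt0r_neq0 w_pos) ev)).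
- by exfalso; have := fq k; lra.
- by exfalso; have := gq l; lra.
- by exfalso; have := fq l; lra.
Qed.

Lemma negligible_tie Phi o o' : o <> o' ->
  (@leb2 R).-negligible [set x | payoff Phi x o = payoff Phi x o'].
Proof.
move=> oo'.
have slopes_neq : slope_v o - slope_v o' != 0 \/ slope_c o - slope_c o' != 0.
  rewrite !subr_eq0.
  have [ev|] := eqVneq (slope_v o) (slope_v o'); last by left.
  by right; apply/eqP => ec; exact: oo' (slopes_inj ev ec).
have := negligible_line (intercept Phi o - intercept Phi o') slopes_neq.
apply: (negligibleS (mu := @leb2 R)).
by move=> x; rewrite /= !payoffE; lra.
Qed.

Lemma measurable_best Phi o : measurable [set x | is_best Phi x o].
Proof.
have -> : [set x | is_best Phi x o] =
    \bigcap_(o' in [set: role K]) [set x | payoff Phi x o' <= payoff Phi x o].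
  by apply/seteqP; split => [x best o' _|x best o']; exact: best.
apply: fin_bigcap_measurable finite_roles _ => o' _.
rewrite -[X in measurable X]setTI; apply: measurable_fun_le => //.
  by under eq_fun do rewrite payoffE; exact: measurable_fun_affine.
by under eq_fun do rewrite payoffE; exact: measurable_fun_affine.
Qed.

Lemma leb2_preimage_best Phi (sigma : R * R -> role K) o :
  measurable (sigma @^-1` [set o]) ->
  ae_best_response q f g h w s p sigma Phi ->
  @leb2 R (sigma @^-1` [set o] `&` @square R) =
  @leb2 R ([set x | is_best Phi x o] `&` @square R).
Proof.
move=> m_pre sigma_best.
have ties_negl : (@leb2 R).-negligible
    (\bigcup_(o' in [set o' | o' <> o])
       [set x | payoff Phi x o = payoff Phi x o']).
  apply: (negligible_fin_bigcup (mu := @leb2 R)) => [|o' /nesym].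
    exact: sub_finite_set finite_roles.
  exact: negligible_tie.
have m_pre_sq := measurableI _ _ m_pre (@measurable_square R).
have m_best_sq :=
  measurableI _ _ (measurable_best Phi o) (@measurable_square R).
apply/le_anti/andP; split.
  apply: (le_measure_negligible (mu := @leb2 R) m_pre_sq m_best_sq sigma_best).
  move=> x [/= sx sq]; have [best|not_best] := pselect (is_best Phi x o).
    by left.
  by right; split => //; rewrite sx.
have null := negligibleU (mu := @leb2 R) sigma_best ties_negl.
apply: (le_measure_negligible (mu := @leb2 R) m_best_sq m_pre_sq null).
move=> x [best sq].
have [sx|sx] := pselect (sigma x = o); first by left.
right; have [best_sx|] := pselect (is_best Phi x (sigma x)); last by left.
right; exists (sigma x) => //.
by apply/le_anti; rewrite (best (sigma x)) (best_sx o).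
Qed.

Lemma Phi_of_ae_best_response Phi (sigma : R * R -> role K) :
  (forall o, measurable (sigma @^-1` [set o])) ->
  ae_best_response q f g h w s p sigma Phi ->
  Phi_of q h p sigma = Phi_tilde q f g h w s p Phi.
Proof.
move=> sigma_meas sigma_best.
have share_BR o :
    share (sigma @^-1` [set o]) = share [set x | square x /\ is_best Phi x o].
  rewrite /share (leb2_preimage_best (sigma_meas o) sigma_best).
  congr (fine (leb2 _)); apply/seteqP.
  by split => [x [best sq]|x [[sq best] _]]; split => //; split.
rewrite /Phi_of /Phi_tilde.
by congr avg_benefit; apply/funext => i; exact: share_BR.
Qed.

End game.

Theorem proposition7 (R : realType) (K : nat) (q : 'I_K -> R)
  (f g h : R -> R) (w s p : R)
  (q_pos : forall k, 0 < q k)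
  (q_incr : forall k l : 'I_K, (k < l)%N -> q k < q l)
  (f_incr : forall x y : R, 0 < x -> x < y -> f x < f y)
  (g_incr : forall x y : R, 0 < x -> x < y -> g x < g y)
  (h_incr : forall x y : R, 0 < x -> x < y -> h x < h y)
  (f_pos : forall x : R, 0 < x -> 0 < f x)
  (g_pos : forall x : R, 0 < x -> 0 < g x)
  (w_pos : 0 < w) (s_ge0 : 0 <= s) (p_ge0 : 0 <= p)
  (sigma : R * R -> role K)
  (sigma_meas : forall o : role K, measurable (sigma @^-1` [set o])) :
  (equilibrium q f g h w s p sigma ->
     forall k, Phi_of q h p sigma k = Phi_tilde q f g h w s p (Phi_of q h p sigma) k)
  /\
  (forall Phi : 'I_K -> R,
     (forall k, Phi k = Phi_tilde q f g h w s p Phi k) ->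
     ae_best_response q f g h w s p sigma Phi ->
     equilibrium q f g h w s p sigma /\ Phi_of q h p sigma = Phi).
Proof.
have Phi_ofE Phi : ae_best_response q f g h w s p sigma Phi ->
    Phi_of q h p sigma = Phi_tilde q f g h w s p Phi.
  exact: Phi_of_ae_best_response.
split=> [sigma_eq k|Phi Phi_fixed sigma_best].
  by rewrite -(Phi_ofE _ sigma_eq).
have Phi_of_sigma : Phi_of q h p sigma = Phi.
  by rewrite (Phi_ofE _ sigma_best); apply/funext => k; rewrite -Phi_fixed.
by rewrite /equilibrium Phi_of_sigma.
Qed.
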